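(* Let $\{r_n\}_{n\ge1}$ be a sequence of positive odd integers. For every $n\in\mathbb{N}$, $$\mathcal{L}\left(\{x\in\mathbb{I}\colon y_1(x)\le\tfrac{1}{r_1},\ y_2(x)\le\tfrac1{r_2},\dots,y_n(x)\le\tfrac1{r_n}\}\right)=\frac{1}{r_1r_2\cdots r_n}.$$
   Context: $\mathcal{L}$ is Lebesgue measure, $\mathbb{I}=(0,1)\setminus\mathbb{Q}$. Define $T\colon[0,1)\to[0,1)$ by: for $k\in\mathbb{N}$, $Tx=\lceil 1/x\rceil x-1$ if $x\in(\frac{1}{2k},\frac{1}{2k-1})$; $Tx=1-\lfloor 1/x\rfloor x$ if $x\in(\frac{1}{2k+1},\frac{1}{2k})$; $Tx=0$ if $x\in\{0\}\cup\{1/n\colon n\ge 2\}$. For $x\in(0,1)$ define $d_1(x)=\lceil 1/x\rceil$, $s_1(x)=1$ if $x\in[\frac{1}{2k},\frac{1}{2k-1})$ for some $k$, and $d_1(x)=\lfloor 1/x\rfloor$, $s_1(x)=-1$ if $x\in[\frac{1}{2k+1},\frac{1}{2k})$ for some $k$; $d_{n+1}(x)=d_1(T^nx)$, $s_{n+1}(x)=s_1(T^nx)$, $\epsilon_1(x)=1$, $\epsilon_{n+1}(x)=\prod_{k=1}^ns_k(x)$. For $x\in\mathbb{I}$ define $y_1(x)=x$ and, for $n\ge2$, $y_n(x)=(d_{n-1}(x)-1)T^{n-1}x$ if $\epsilon_n(x)=\epsilon_{n-1}(x)$, and $y_n(x)=(d_{n-1}(x)+1)T^{n-1}x$ if $\epsilon_n(x)=-\epsilon_{n-1}(x)$.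 *)

From HB Require Import structures.
From mathcomp Require Import all_boot all_order all_algebra.
From mathcomp Require Import all_classical all_reals all_analysis.
Set Implicit Arguments. Unset Strict Implicit. Unset Printing Implicit Defensive.
Import Order.TTheory GRing.Theory Num.Theory.
Local Open Scope ring_scope.
Local Open Scope classical_set_scope.

Section Defs.
Variable R : realType.

Definition irrational (x : R) : Prop := ~ exists q : rat, x = ratr q.

Definition Irr : set R := [set x | 0 < x < 1 /\ irrational x].

(* For x in (0,1):
   x in (1/(2k), 1/(2k-1))   <=>  2k-1 < 1/x < 2k    <=> floor(1/x) odd, 1/x not an integer
   x in (1/(2k+1), 1/(2k))   <=>  2k < 1/x < 2k+1    <=> floor(1/x) even, 1/x not an integer
   x in {0} U {1/n : n >= 2} <=>  x = 0 or 1/x integer (for x in [0,1)). *)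
Definition T (x : R) : R :=
  if x == 0 then 0
  else if (Num.floor x^-1)%:~R == x^-1 then 0
  else if odd `|Num.floor x^-1|%N then (Num.ceil x^-1)%:~R * x - 1
  else 1 - (Num.floor x^-1)%:~R * x.

(* For x in (0,1):
   x in [1/(2k), 1/(2k-1))  <=> 2k-1 < 1/x <= 2k  <=> ceil(1/x) even (= 2k);
   then d_1 = ceil(1/x), s_1 = 1.
   x in [1/(2k+1), 1/(2k)) <=> 2k < 1/x <= 2k+1 <=> ceil(1/x) odd (= 2k+1);
   then d_1 = floor(1/x), s_1 = -1. *)
Definition d1 (x : R) : int :=
  if ~~ odd `|Num.ceil x^-1|%N then Num.ceil x^-1 else Num.floor x^-1.
Definition s1 (x : R) : int :=
  if ~~ odd `|Num.ceil x^-1|%N then 1 else -1.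

(* d_n(x) = d_1(T^{n-1} x), s_n(x) = s_1(T^{n-1} x) for n >= 1 (index 0 unused) *)
Definition dn (n : nat) (x : R) : int := d1 (iter n.-1 T x).
Definition sn (n : nat) (x : R) : int := s1 (iter n.-1 T x).

Definition epsn (n : nat) (x : R) : int := \prod_(1 <= k < n) sn k x.

Definition yn (n : nat) (x : R) : R :=
  if (n <= 1)%N then x
  else if epsn n x == epsn n.-1 x
       then (dn n.-1 x - 1)%:~R * iter n.-1 T x
       else (dn n.-1 x + 1)%:~R * iter n.-1 T x.

End Defs.

(* On the cylinder [j] = ]1/(j+1), 1/j[ the map T is affine, T x = a_j x + b_j,
   and y_2 = c_j T with c_j = j or j + 1 according to the parity of j, so that
   |a_j| c_j = j (j + 1); moreover y_(i+1) = y_i o T for i >= 2.  Hence the set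
   cut out by y_i <= 1/r_i for i <= n + 1 is the disjoint union, over j >= r_1,
   of the preimages under x |-> a_j x + b_j of the set cut out by n conditions
   with bounds c_j r_2, r_3, ..., r_(n+1).  By induction such a preimage has
   measure 1 / (|a_j| c_j r_2 ... r_(n+1)) = |cylinder j| / (r_2 ... r_(n+1)),
   and the cylinders j >= r_1 fill ]0, 1/r_1] up to the rationals. *)

From HB Require Import structures.
From mathcomp Require Import all_boot all_order all_algebra.
From mathcomp Require Import all_classical all_reals all_analysis.
From mathcomp Require Import measurable_realfun.
From mathcomp Require Import ring lra zify.
Import Order.TTheory GRing.Theory Num.Theory.
Local Open Scope ring_scope.
Local Open Scope classical_set_scope.

Set Implicit Arguments. Unset Strict Implicit. Unset Printing Implicit Defensive.

Section Irrationality.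
Context {R : realType}.
Implicit Types x : R.

(* [irrational] is the library's [~` rational], which shadows the notion of the
   same name used to define [Irr]. *)
Lemma Irr_irrational x : Irr x <-> 0 < x < 1 /\ irrational x.
Proof.
split=> -[x01 hx]; split=> // -[q]; [move=> _ qx | move=> qx];
  by apply: hx; exists q.
Qed.

Lemma rational_invn (n : nat) : rational (n%:R^-1 : R).
Proof. by exists n%:R^-1; rewrite // fmorphV rmorph_nat. Qed.

Lemma rational_affine (c d : rat) x : c != 0 ->
  rational (ratr c * x + ratr d) <-> rational x.
Proof.
move=> c0; split=> -[q _ qx].
  exists ((q - d) / c) => //.
  by rewrite fmorph_div rmorphB /= qx; field; rewrite fmorph_eq0.
by exists (c * q + d) => //; rewrite rmorphD rmorphM /= qx.
Qed.

Lemma irrational_inv_notint x : irrational x -> x^-1 \isn't a Num.int.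
Proof.
move=> hx; apply/negP => /intrP [z hz]; apply: hx.
by exists z%:~R^-1 => //; rewrite fmorphV /= ratr_int -hz invrK.
Qed.

End Irrationality.

Section LebesgueAffine.
Context {R : realType}.
Local Notation mu := (@lebesgue_measure R).

Lemma measurable_fun_affine (a b : R) : measurable_fun setT (fun x : R => a * x + b).
Proof. by apply: measurable_funD => //; exact: measurable_funM. Qed.

Lemma measurable_affine_preimage (a b : R) (A : set R) : measurable A ->
  measurable ((fun x => a * x + b) @^-1` A).
Proof.
by move=> mA; rewrite -[X in measurable X]setTI; exact: measurable_fun_affine.
Qed.

Lemma affine_preimage_oc (a b c d : R) : 0 < a ->
  (fun x => a * x + b) @^-1` `]c, d] = `](c - b) / a, (d - b) / a].
Proof.
move=> a0; apply/seteqP; split=> z /=; rewrite !in_itv /=.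
  by rewrite ltr_pdivrMr // ler_pdivlMr // mulrC ltrBlDr lerBrDr.
by rewrite ltr_pdivrMr // ler_pdivlMr // mulrC ltrBlDr lerBrDr.
Qed.

Lemma affine_preimage_oc_neg (a b c d : R) : a < 0 ->
  (fun x => a * x + b) @^-1` `]c, d] = `[(d - b) / a, (c - b) / a[.
Proof.
move=> a0; apply/seteqP; split=> z /=; rewrite !in_itv /=.
  by rewrite ler_ndivrMr // ltr_ndivlMr // mulrC ltrBlDr lerBrDr andbC.
by rewrite ler_ndivrMr // ltr_ndivlMr // mulrC ltrBlDr lerBrDr andbC.
Qed.

Lemma lebesgue_measure_affine_preimage (a b : R) (A : set R) :
  a != 0 -> measurable A ->
  mu ((fun x => a * x + b) @^-1` A) = ((`|a|^-1)%:E * mu A)%E.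
Proof.
move=> a0 mA.
(* The measure structure of [pushforward] depends on the measurability of the
   map, which is the argument of [nu]. *)
pose nu := mscale (NngNum (normr_ge0 a))
  (pushforward mu (fun x : measurableTypeR R => (a * x + b : measurableTypeR R))).
have := @lebesgue_measure_unique R (nu (measurable_fun_affine a b)) _ A mA.
rewrite /nu /mscale /pushforward /= => ->.
  by rewrite muleA -EFinM mulVf ?normr_eq0 // mul1e.
move=> _ [[c d] _ <-]; rewrite /mscale /= /pushforward.
have [ap|an] := ltP 0 a.
  rewrite affine_preimage_oc // !lebesgue_measure_itv /= !lte_fin.
  rewrite ltr_pM2r ?invr_gt0 // ltrD2r; case: ifP => _; last by rewrite mule0.
  by rewrite -!EFinB -EFinM gtr0_norm //; congr (_%:E); field; rewrite gt_eqF.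
have {}an : a < 0 by rewrite lt_neqAle a0.
rewrite affine_preimage_oc_neg // !lebesgue_measure_itv /= !lte_fin.
rewrite ltr_nM2r ?invr_lt0 // ltrD2r; case: ifP => _; last by rewrite mule0.
by rewrite -!EFinB -EFinM ltr0_norm //; congr (_%:E); field; rewrite lt_eqF.
Qed.

Lemma measurable_rational : measurable (@rational R).
Proof.
apply: countable_measurable => [t|]; first exact: measurable_set1.
exact: (card_le_trans (card_image_le _ _) (countableP setT)).
Qed.

Lemma lebesgue_measureD_rational (A : set R) : measurable A ->
  mu (A `\` rational) = mu A.
Proof.
move=> mA; rewrite [RHS](measureDI mu mA measurable_rational).
rewrite [X in (_ + X)%E](_ : _ = 0%E) ?adde0 //.
apply/eqP; rewrite eq_le measure_ge0 andbT -(lebesgue_measure_rat R).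
by apply: le_measure; rewrite ?inE; [exact: measurableI measurable_rational|
  exact: measurable_rational| exact: subIsetr].
Qed.

End LebesgueAffine.

Section YsequenceMeasure.
Context {R : realType}.
Local Notation mu := (@lebesgue_measure R).
Implicit Types (x : R) (i j m : nat) (r : nat -> nat).

Definition cylinder j : set R := `](j.+1%:R)^-1, (j%:R)^-1[.

Definition branch_slope j : R := if odd j then j.+1%:R else - j%:R.
Definition branch_shift j : R := if odd j then -1 else 1.
Definition Tbranch j x : R := branch_slope j * x + branch_shift j.

Definition ycoef j : nat := if odd j then j else j.+1.

Lemma ycoef_gt0 j : (0 < ycoef j)%N.
Proof. by rewrite /ycoef; case: ifP => // /odd_gt0. Qed.

Lemma cylinder_gt0 j x : cylinder j x -> (0 < j)%N.
Proof.
rewrite /cylinder /= in_itv /=; case: j => // /andP[h1 h2].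
by move: (lt_trans h1 h2); rewrite invr0 invr1 ltr10.
Qed.

Lemma cylinderP j x : (0 < j)%N ->
  cylinder j x <-> 0 < x /\ j%:R < x^-1 < j.+1%:R.
Proof.
move=> j0; rewrite /cylinder /= in_itv /=.
have jp : (0 : R) < j%:R by rewrite ltr0n.
split=> [/andP[h1 h2]|[x0 /andP[h1 h2]]].
  have x0 : 0 < x by apply: lt_trans h1; rewrite invr_gt0 ltr0n.
  split=> //; apply/andP; split.
    by rewrite -[X in X < _]invrK ltf_pV2 ?posrE ?invr_gt0.
  by rewrite -[X in _ < X]invrK ltf_pV2 ?posrE ?invr_gt0 ?ltr0n.
apply/andP; split.
  by rewrite -[X in _ < X]invrK ltf_pV2 ?posrE ?invr_gt0 ?ltr0n.
by rewrite -[X in X < _]invrK ltf_pV2 ?posrE ?invr_gt0.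
Qed.

Lemma cylinder_itv01 j x : cylinder j x -> 0 < x < 1.
Proof.
move=> cx; have j0 := cylinder_gt0 cx; have [x0 /andP[jx _]] := (cylinderP x j0).1 cx.
by rewrite x0 -invf_gt1 // (le_lt_trans _ jx) // ler1n.
Qed.

Lemma floor_inv_cylinder j x : cylinder j x -> Num.floor x^-1 = j%:Z.
Proof.
move=> cx; have [_ /andP[h1 h2]] := (cylinderP x (cylinder_gt0 cx)).1 cx.
by apply/eqP; rewrite floor_eq ltW //= addrC -intS.
Qed.

Lemma ceil_inv_cylinder j x : cylinder j x -> irrational x ->
  Num.ceil x^-1 = j.+1%:Z.
Proof.
move=> cx hx; rewrite ceil_floor (floor_inv_cylinder cx).
by rewrite (negbTE (irrational_inv_notint hx)) addrC -intS.
Qed.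

Lemma cylinder_inj i j x : cylinder i x -> cylinder j x -> i = j.
Proof.
by move=> /floor_inv_cylinder fi /floor_inv_cylinder; rewrite fi => -[].
Qed.

Lemma cylinder_le_inv (r1 j : nat) x : (0 < r1)%N -> (r1 <= j)%N ->
  cylinder j x -> x <= r1%:R^-1.
Proof.
move=> r0 rj; rewrite /cylinder /= in_itv /= => /andP[_ /ltW/le_trans]; apply.
by rewrite lef_pV2 ?posrE ?ltr0n ?ler_nat // (leq_trans r0).
Qed.

Lemma exists_cylinder (r1 : nat) x : (0 < r1)%N -> 0 < x -> x <= r1%:R^-1 ->
  irrational x -> exists2 j, (r1 <= j)%N & cylinder j x.
Proof.
move=> r0 x0 xr hx.
have r1x : r1%:R <= x^-1.
  by rewrite -[X in X <= _]invrK lef_pV2 ?posrE ?invr_gt0 ?ltr0n.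
have := floor_itv x^-1; set z := Num.floor x^-1 => /andP[zx xz].
have r1z : r1%:Z <= z by rewrite floor_ge_int.
have ez : z = `|z|%N by rewrite abszE ger0_norm // (le_trans _ r1z).
rewrite ez in zx xz r1z; exists `|z|%N; first by rewrite -lez_nat.
have z0 : (0 < `|z|)%N by rewrite -ltz_nat (lt_le_trans _ r1z) // ltz_nat.
apply/(cylinderP _ z0); split=> //; apply/andP; split; last first.
  by rewrite addrC -intS in xz.
rewrite lt_neqAle zx andbT; apply/negP => /eqP zxE.
by move: (irrational_inv_notint hx); rewrite -zxE intr_nat.
Qed.

Lemma T_cylinder j x : cylinder j x -> irrational x -> T x = Tbranch j x.
Proof.
move=> cx hx; have [x0 /andP[jx _]] := (cylinderP x (cylinder_gt0 cx)).1 cx.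
rewrite /T gt_eqF // (floor_inv_cylinder cx) (ceil_inv_cylinder cx hx) /=.
rewrite -!pmulrn (_ : (j%:R == x^-1) = false); last by rewrite lt_eqF.
by rewrite /Tbranch /branch_slope /branch_shift; case: ifP => _; ring.
Qed.

Lemma cylinder_Tbranch j x : (0 < j)%N ->
  cylinder j x <-> 0 < Tbranch j x < (ycoef j)%:R^-1.
Proof.
move=> j0; rewrite /cylinder /= in_itv /= /Tbranch /branch_slope /branch_shift /ycoef.
have u0 : (0 : R) < j%:R by rewrite ltr0n.
have v0 : (0 : R) < j.+1%:R by rewrite ltr0n.
rewrite -[X in X < x]mulr1 -[X in x < X]mulr1 ltr_pdivrMl // ltr_pdivlMl //.
have -> : (j.+1%:R : R) = j%:R + 1 by rewrite -natr1.
case: ifP => _.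
  rewrite -[(j%:R)^-1]mulr1 ltr_pdivlMl //.
  set u := (j%:R : R) in u0 v0 *.
  by split => /andP[h1 h2]; apply/andP; split; nra.
rewrite -[(j.+1%:R)^-1]mulr1 ltr_pdivlMl // -natr1 -mulNrn.
set u := (j%:R : R) in u0 v0 *.
by split => /andP[h1 h2]; apply/andP; split; nra.
Qed.

Lemma rational_Tbranch j x : (0 < j)%N -> rational (Tbranch j x) <-> rational x.
Proof.
move=> j0; rewrite /Tbranch /branch_slope /branch_shift; case: ifP => _.
  by have := @rational_affine R j.+1%:R (-1) x; rewrite rmorph_nat rmorphN rmorph1; apply.
have := @rational_affine R (- j%:R) 1 x; rewrite rmorphN rmorph_nat rmorph1; apply.
by rewrite oppr_eq0 pnatr_eq0 -lt0n.
Qed.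

Lemma branch_slope_neq0 j : (0 < j)%N -> branch_slope j != 0 :> R.
Proof.
by move=> j0; rewrite /branch_slope; case: ifP => _; rewrite ?oppr_eq0 pnatr_eq0 // -lt0n.
Qed.

Lemma branch_slope_ycoef j :
  `|branch_slope j| * (ycoef j)%:R = j%:R * j.+1%:R :> R.
Proof.
by rewrite /branch_slope /ycoef; case: ifP => _; rewrite ?normrN ger0_norm // mulrC.
Qed.

Lemma lebesgue_measure_cylinder j : (0 < j)%N ->
  mu (cylinder j) = ((j%:R * j.+1%:R)^-1)%:E.
Proof.
move=> j0; rewrite lebesgue_measure_itv /= lte_fin.
rewrite ltf_pV2 ?posrE ?ltr0n // ltr_nat ltnSn -EFinD; congr (_%:E).
have jn0 : (j%:R : R) != 0 by rewrite pnatr_eq0 -lt0n.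
by rewrite -natr1; field; rewrite jn0 natr1 pnatr_eq0.
Qed.

Lemma lebesgue_measure_cylinders (r1 : nat) : (0 < r1)%N ->
  (\sum_(0 <= j <oo | j \in [set j | r1 <= j]%N) mu (cylinder j))%E = (r1%:R^-1)%:E.
Proof.
move=> r0; set D := [set j | (r1 <= j)%N].
have tD : trivIset D cylinder.
  by move=> i j _ _ [x [ci cj]]; exact: cylinder_inj ci cj.
have itvE : mu `]0, r1%:R^-1] = (r1%:R^-1)%:E.
  by rewrite lebesgue_measure_itv /= lte_fin invr_gt0 ltr0n r0 oppr0 adde0.
rewrite -(measure_bigcup mu D _ (fun j _ => measurable_itv _) tD) -itvE.
apply/eqP; rewrite eq_le; apply/andP; split.
  apply: le_measure; rewrite ?inE //; first exact: bigcup_measurable.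
  move=> x [j rj cx] /=; rewrite in_itv /= (cylinder_le_inv r0 rj cx) andbT.
  by have /andP[] := cylinder_itv01 cx.
rewrite -lebesgue_measureD_rational //; apply: le_measure; rewrite ?inE.
- exact: measurableD measurable_rational.
- exact: bigcup_measurable.
move=> x /=; rewrite in_itv /= => -[/andP[x0 xr] hx].
by have [j rj cx] := exists_cylinder r0 x0 xr hx; exists j.
Qed.

Lemma epsn_neq0 n x : epsn n x != 0.
Proof.
rewrite /epsn prodf_seq_neq0; apply/allP => i _ /=.
by rewrite /sn /s1; case: ifP.
Qed.

Lemma yn_iterT n x : yn n.+2 x = yn 2 (iter n (@T R) x).
Proof.
rewrite /yn /=.
have -> : epsn n.+2 x = epsn n.+1 x * sn n.+1 x by rewrite /epsn big_nat_recr.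
rewrite -{2}[epsn n.+1 x]mulr1 (inj_eq (mulfI (epsn_neq0 _ _))).
by rewrite /epsn /dn /sn /= big_nat1 big_geq.
Qed.

Lemma y2_cylinder j x : cylinder j x -> irrational x ->
  yn 2 x = (ycoef j)%:R * Tbranch j x.
Proof.
move=> cx hx; rewrite /yn /epsn /= big_nat1 big_geq // /dn /sn /=.
rewrite (T_cylinder cx hx) /s1 /d1 (ceil_inv_cylinder cx hx).
rewrite (floor_inv_cylinder cx) /ycoef /=.
case: (odd j) => /=.
  by rewrite -addn1 PoszD addrK -pmulrn.
by rewrite addrC -intS -pmulrn.
Qed.

Lemma ynSS n x : yn n.+3 x = yn n.+2 (T x).
Proof. by rewrite yn_iterT [RHS]yn_iterT iterSr. Qed.

Definition ybounded r m x :=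
  forall i, (1 <= i <= m)%N -> yn i x <= (r i)%:R^-1.

Definition ybounded_set r m : set R := [set x | Irr x /\ ybounded r m x].

Definition shift_bounds j r i : nat := if i == 1%N then (ycoef j * r 2)%N else r i.+1.

Lemma ybounded_cylinder j r m x : cylinder j x -> irrational x ->
  ybounded r m.+1 x <->
  x <= (r 1%N)%:R^-1 /\ ybounded (shift_bounds j r) m (Tbranch j x).
Proof.
move=> cx hx.
have y2E : forall t : nat, (yn 2 x <= t%:R^-1) = (Tbranch j x <= (ycoef j * t)%:R^-1).
  move=> t; rewrite (y2_cylinder cx hx) natrM invfM.
  by rewrite ler_pdivlMl ?ltr0n ?ycoef_gt0.
split=> [H|[x1 H] [|[|[|i]]] // im].
- split=> [|[|[|i]] // im]; first exact: (H 1%N).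
    by rewrite /shift_bounds /yn /= -y2E; apply: H; lia.
  by rewrite /shift_bounds /= -(T_cylinder cx hx) -ynSS; apply: H; lia.
- by rewrite y2E; have := H 1%N; rewrite /shift_bounds /yn /=; apply; lia.
- rewrite ynSS (T_cylinder cx hx); have := H i.+2.
  by rewrite /shift_bounds /=; apply; lia.
Qed.

Definition branch_set r m j : set R := Tbranch j @^-1` ybounded_set (shift_bounds j r) m.

Lemma shift_bounds_gt0 j r : (forall i, (0 < i)%N -> (0 < r i)%N) ->
  forall i, (0 < i)%N -> (0 < shift_bounds j r i)%N.
Proof.
move=> r0 [|[|i]] // _; last exact: r0.
by rewrite /shift_bounds /= muln_gt0 ycoef_gt0 r0.
Qed.

Lemma prod_shift_bounds j r m : (0 < m)%N ->
  (\prod_(1 <= i < m.+1) shift_bounds j r i = ycoef j * \prod_(2 <= i < m.+2) r i)%N.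
Proof.
move=> m0; rewrite big_ltn // [in RHS]big_ltn // mulnA [in RHS]big_add1 /=.
by congr (_ * _)%N; apply: eq_big_nat => i /andP[i1 _]; rewrite /shift_bounds gtn_eqF.
Qed.

Lemma branch_set_sub_cylinder r m j : (0 < m)%N -> (0 < r 2)%N -> (0 < j)%N ->
  branch_set r m j `<=` cylinder j.
Proof.
move=> m0 r20 j0 x [+ bounded] => /Irr_irrational[/andP[Tx0 _] hTx].
apply/(cylinder_Tbranch _ j0); rewrite Tx0 lt_neqAle /=; apply/andP; split.
  by apply: contraPneq hTx => -> /(_ (rational_invn _)).
apply: le_trans (bounded 1%N m0) _; rewrite /shift_bounds /=.
by rewrite lef_pV2 ?posrE ?ltr0n ?muln_gt0 ?ycoef_gt0 // ler_nat leq_pmulr.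
Qed.

Lemma ybounded_set1 r : (0 < r 1%N)%N ->
  ybounded_set r 1 = `]0, (r 1%N)%:R^-1] `\` @rational R.
Proof.
move=> r0; apply/seteqP; split=> x /=; rewrite in_itv /=.
  by move=> [/Irr_irrational[/andP[x0 _] hx] /(_ 1%N isT) xr]; rewrite x0.
move=> [/andP[x0 xr] hx]; split=> [|[|[|i]] //]; apply/Irr_irrational.
split=> //; rewrite x0 lt_neqAle (le_trans xr) ?invf_le1 ?ltr0n ?ler1n // andbT.
by apply: contraPneq hx => ->; rewrite -invr1 => /(_ (rational_invn 1)).
Qed.

Lemma ybounded_set_bigcup r m : (forall i, (0 < i)%N -> (0 < r i)%N) -> (0 < m)%N ->
  ybounded_set r m.+1 = \bigcup_(j in [set j | (r 1%N <= j)%N]) branch_set r m j.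
Proof.
move=> r_gt0 m0; apply/seteqP; split=> x.
  move=> [/Irr_irrational[/andP[x0 _] hx] bounded].
  have [j r1j cx] := exists_cylinder (r_gt0 1%N isT) x0 (bounded 1%N isT) hx.
  have j0 : (0 < j)%N := leq_trans (r_gt0 1%N isT) r1j.
  exists j => //; have [_ Tbounded] := (ybounded_cylinder r m cx hx).1 bounded.
  split=> //; apply/Irr_irrational; split; last by move/(rational_Tbranch x j0).
  have /andP[-> Txc] := (cylinder_Tbranch x j0).1 cx.
  by rewrite (lt_le_trans Txc) // invf_le1 ?ltr0n ?ycoef_gt0 // ler1n ycoef_gt0.
move=> [j /= r1j Bx]; have j0 : (0 < j)%N := leq_trans (r_gt0 1%N isT) r1j.
have cx := branch_set_sub_cylinder m0 (r_gt0 2%N isT) j0 Bx.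
have hx : ~ rational x.
  by case: Bx => /Irr_irrational[_ hTx] _ /(rational_Tbranch x j0).
split; first by apply/Irr_irrational; split; [exact: cylinder_itv01 cx|].
apply/(ybounded_cylinder r m cx hx); split; last by case: Bx.
exact: cylinder_le_inv (r_gt0 1%N isT) r1j cx.
Qed.

Lemma measurable_ybounded_set r m : (forall i, (0 < i)%N -> (0 < r i)%N) -> (0 < m)%N ->
  measurable (ybounded_set r m).
Proof.
elim: m r => // m IH r r_gt0 _; have [->|m0] := posnP m.
  by rewrite ybounded_set1 ?r_gt0 //; exact: measurableD measurable_rational.
rewrite ybounded_set_bigcup //; apply: bigcup_measurable => j _.
apply: measurable_affine_preimage; apply: IH => //; exact: shift_bounds_gt0.
Qed.

Lemma trivIset_branch_set r m : (forall i, (0 < i)%N -> (0 < r i)%N) -> (0 < m)%N ->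
  trivIset [set j | (r 1%N <= j)%N] (branch_set r m).
Proof.
move=> r_gt0 m0 i k /= r1i r1k [x [Bi Bk]].
have sub_cylinder j : (r 1%N <= j)%N -> branch_set r m j `<=` cylinder j.
  move=> r1j; apply: branch_set_sub_cylinder => //; first exact: r_gt0.
  exact: leq_trans (r_gt0 1%N isT) r1j.
exact: cylinder_inj (sub_cylinder i r1i x Bi) (sub_cylinder k r1k x Bk).
Qed.

Lemma lebesgue_measure_branch_set r m j (P : nat) : (0 < j)%N -> (0 < P)%N ->
  measurable (ybounded_set (shift_bounds j r) m) ->
  mu (ybounded_set (shift_bounds j r) m) = (((ycoef j * P)%N)%:R^-1)%:E ->
  mu (branch_set r m j) = ((P%:R^-1)%:E * mu (cylinder j))%E.
Proof.
move=> j0 P0 mY muY.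
rewrite lebesgue_measure_affine_preimage ?branch_slope_neq0 //.
rewrite muY lebesgue_measure_cylinder // -!EFinM; congr (_%:E).
rewrite -(branch_slope_ycoef j) natrM.
have slope_neq0 : `|branch_slope j| != 0 by rewrite normr_eq0 branch_slope_neq0.
by field; rewrite slope_neq0 !pnatr_eq0 -!lt0n ycoef_gt0 P0.
Qed.

Lemma lebesgue_measure_ybounded_set r m :
  (forall i, (0 < i)%N -> (0 < r i)%N) -> (0 < m)%N ->
  mu (ybounded_set r m) = (((\prod_(1 <= i < m.+1) r i)%N)%:R^-1)%:E.
Proof.
elim: m r => // m IH r r_gt0 _; have r1_gt0 := r_gt0 1%N isT.
have [->|m0] := posnP m.
  rewrite ybounded_set1 // lebesgue_measureD_rational // lebesgue_measure_itv /= lte_fin.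
  by rewrite invr_gt0 ltr0n r1_gt0 oppr0 adde0 big_nat1.
set P := (\prod_(2 <= i < m.+2) r i)%N.
have P_gt0 : (0 < P)%N.
  rewrite /P big_nat_cond; apply: prodn_cond_gt0 => i /andP[/andP[i2 _] _].
  exact: r_gt0 (leq_trans _ i2).
have mY j := measurable_ybounded_set (shift_bounds_gt0 j r_gt0) m0.
have mu_branch j : (r 1%N <= j)%N ->
    mu (branch_set r m j) = ((P%:R^-1)%:E * mu (cylinder j))%E.
  move=> r1j; apply: lebesgue_measure_branch_set => //.
    exact: leq_trans r1_gt0 r1j.
  by rewrite IH // ?prod_shift_bounds //; exact: shift_bounds_gt0.
have mB j : measurable (branch_set r m j) := measurable_affine_preimage _ _ (mY j).
rewrite ybounded_set_bigcup //.
rewrite (measure_bigcup mu _ _ (fun j _ => mB j) (trivIset_branch_set r_gt0 m0)).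
rewrite (eq_eseriesr (g := fun j => ((P%:R^-1)%:E * mu (cylinder j))%E)); last first.
  by move=> j; rewrite inE; exact: mu_branch.
rewrite nneseriesZl; last by move=> j _; exact: measure_ge0.
by rewrite lebesgue_measure_cylinders // -EFinM big_ltn // natrM invfM mulrC.
Qed.

End YsequenceMeasure.

Theorem lemma3p6 (R : realType) (r : nat -> nat)
  (hr : forall i : nat, (1 <= i)%N -> (0 < r i)%N /\ odd (r i))
  (n : nat) (hn : (1 <= n)%N) :
  (@lebesgue_measure R)
    [set x | Irr x /\ forall i : nat, (1 <= i <= n)%N -> yn i x <= ((r i)%:R)^-1]
  = (((\prod_(1 <= i < n.+1) r i)%N)%:R^-1)%:E.
Proof.
have r_gt0 i : (0 < i)%N -> (0 < r i)%N by move=> /hr[].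
exact: lebesgue_measure_ybounded_set r_gt0 hn.
Qed.
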